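(* Suppose that $X(\mathbb{R})$ is a translation-invariant Banach function space. If $w(x):=e^{cx}$ for $x\in\mathbb{R}$ with a constant $c>0$, then the weighted Banach function space $X(\mathbb{R},w)$ does not satisfy the weak doubling property.
   Context: Banach function spaces on $\mathbb{R}^n$ (here $n=1$): let $\mathfrak{M}^+$ be the set of measurable functions with values in $[0,\infty]$. A Banach function norm $\rho:\mathfrak{M}^+\to[0,\infty]$ satisfies, for all $f,g,f_j\in\mathfrak{M}^+$, $a\ge0$, measurable $E$: (A1) $\rho(f)=0\iff f=0$ a.e., $\rho(af)=a\rho(f)$, $\rho(f+g)\le\rho(f)+\rho(g)$; (A2) $0\le g\le f$ a.e. implies $\rho(g)\le\rho(f)$; (A3) $0\le f_j\uparrow f$ a.e. implies $\rho(f_j)\uparrow\rho(f)$; (A4) $|E|<\infty$ implies $\rho(\chi_E)<\infty$; (A5) $|E|<\infty$ implies $\int_Ef\le C_E\rho(f)$ with $C_E$ independent of $f$. $X$ is the set of measurable complex $f$ with $\rho(|f|)<\infty$, $\|f\|_X=\rho(|f|)$. $X$ is translation-invariant if $\|u(\cdot-y)\|_X=\|u\|_X$ for all $y$ and $u\in X$. For a weight $w$, $X(\mathbb{R}^n,w)=\{f: fw\in X\}$ with $\|f\|_{X(\mathbb{R}^n,w)}=\|fw\|_X$. Weak doubling property: a Banach function space $Z(\mathbb{R}^n)$ has it if there is $\tau>1$ with $\liminf_{R\to\infty}\big(\inf_{y\in\mathbb{R}^n}\|\chi_{B(y,\tau R)}\|_{Z}/\|\chi_{B(y,R)}\|_{Z}\big)<\infty$,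 where $B(y,R)$ is the open ball of radius $R$ centered at $y$. *)

From HB Require Import structures.
From mathcomp Require Import all_boot all_order all_algebra.
From mathcomp Require Import all_classical all_reals all_analysis.
From mathcomp Require Import measurable_realfun.
Set Implicit Arguments. Unset Strict Implicit. Unset Printing Implicit Defensive.
Import Order.TTheory GRing.Theory Num.Theory.
Import numFieldNormedType.Exports.
Local Open Scope classical_set_scope.
Local Open Scope ring_scope.
Local Open Scope ereal_scope.

Definition Mplus (R : realType) (f : R -> \bar R) : Prop :=
  measurable_fun [set: R] f /\ (forall x, 0 <= f x).

Definition banach_function_norm (R : realType) (rho : (R -> \bar R) -> \bar R) : Prop :=
  (forall f, Mplus f -> 0 <= rho f) /\
  (forall f, Mplus f ->
     (rho f = 0 <-> \forall x \ae (@lebesgue_measure R), f x = 0)) /\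
  (forall f (a : R), Mplus f -> (0 <= a)%R ->
     rho (fun x => a%:E * f x) = a%:E * rho f) /\
  (forall f g, Mplus f -> Mplus g -> rho (f \+ g) <= rho f + rho g) /\
  (forall f g, Mplus f -> Mplus g ->
     (\forall x \ae (@lebesgue_measure R), g x <= f x) -> rho g <= rho f) /\
  (forall (fs : nat -> R -> \bar R) f, (forall j, Mplus (fs j)) -> Mplus f ->
     (\forall x \ae (@lebesgue_measure R),
        {homo (fun j => fs j x) : i j / (i <= j)%N >-> i <= j} /\
        (fun j => fs j x) @ \oo --> f x) ->
     {homo (fun j => rho (fs j)) : i j / (i <= j)%N >-> i <= j} /\
     (fun j => rho (fs j)) @ \oo --> rho f) /\
  (forall E : set R, measurable E -> (@lebesgue_measure R) E < +oo ->
     rho (fun x => (\1_E x)%:E) < +oo) /\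
  (forall E : set R, measurable E -> (@lebesgue_measure R) E < +oo ->
     exists C : R, forall f, Mplus f ->
       \int[@lebesgue_measure R]_(x in E) f x <= C%:E * rho f).

Definition X_norm (R : realType) (rho : (R -> \bar R) -> \bar R) (u : R -> R) : \bar R :=
  rho (fun x => (`|u x|)%:E).

Definition translation_invariant (R : realType) (rho : (R -> \bar R) -> \bar R) : Prop :=
  forall (u : R -> R) (y : R), measurable_fun [set: R] u -> X_norm rho u < +oo ->
    X_norm rho (fun x => u (x - y)%R) = X_norm rho u.

Definition weighted_norm (R : realType) (rho : (R -> \bar R) -> \bar R) (w : R -> R)
  (f : R -> R) : \bar R := X_norm rho (fun x => (f x * w x)%R).

Definition weak_doubling (R : realType) (N : (R -> R) -> \bar R) : Prop :=
  exists tau : R, (1 < tau)%R /\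
    limf_einf (fun r : R =>
        ereal_inf (range (fun y : R =>
          N (\1_(ball y (tau * r)%R)) * inve (N (\1_(ball y r))))))
      (pinfty_nbhs R) < +oo.

From HB Require Import structures.
From mathcomp Require Import all_boot all_order all_algebra.
From mathcomp Require Import all_classical all_reals all_analysis.
From mathcomp Require Import measurable_realfun.
From mathcomp Require Import lra.
Set Implicit Arguments. Unset Strict Implicit. Unset Printing Implicit Defensive.
Import Order.TTheory GRing.Theory Num.Theory.
Import numFieldNormedType.Exports.
Local Open Scope classical_set_scope.
Local Open Scope ring_scope.

(** Write N(y, r) for the norm of the indicator of B(y, r) in X(R, e^{c.}).
    Translating by s multiplies the weight by e^{cs}, so translation
    invariance of X gives N(y + s, r) = e^{cs} N(y, r).  Since
    B(y + (t - 1) r, r) is contained in B(y, t r), monotonicity yields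
    N(y, t r) / N(y, r) >= e^{c (t - 1) r} for every centre y; the quotient
    is a genuine one because N(y, r) is finite (A4) and nonzero (A1).  The
    bound blows up as r -> +oo, so the liminf in the weak doubling property
    is infinite for every t > 1. *)

Section banach_function_norm_facts.
Variables (R : realType) (rho : (R -> \bar R) -> \bar R).
Hypothesis rho_bfn : banach_function_norm rho.
Local Open Scope ereal_scope.

Lemma Mplus_normr (u : R -> R) : measurable_fun setT u ->
  Mplus (fun x => (`|u x|)%:E).
Proof.
move=> mu; split=> [|x]; last by rewrite lee_fin.
by apply: measurableT_comp => //; apply: measurableT_comp.
Qed.

Lemma X_norm_ge0 (u : R -> R) : measurable_fun setT u -> 0 <= X_norm rho u.
Proof. by case: rho_bfn => rho_ge0 _ mu; apply/rho_ge0/Mplus_normr. Qed.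

Lemma X_normZ (a : R) (u : R -> R) : measurable_fun setT u ->
  X_norm rho (fun x => a * u x)%R = `|a|%:E * X_norm rho u.
Proof.
case: rho_bfn => _ [_ [rhoZ _]] mu.
rewrite /X_norm -rhoZ //; last exact: Mplus_normr.
by congr rho; apply/funext => x; rewrite normrM EFinM.
Qed.

Lemma X_norm_le (u v : R -> R) :
  measurable_fun setT u -> measurable_fun setT v ->
  (forall x, `|u x| <= `|v x|)%R -> X_norm rho u <= X_norm rho v.
Proof.
case: rho_bfn => _ [_ [_ [_ [rho_le _]]]] mu mv uv.
apply: rho_le; [exact: Mplus_normr|exact: Mplus_normr|].
by apply: aeW => x; rewrite lee_fin.
Qed.

Lemma X_norm_bounded_lt_pinfty (u : R -> R) (E : set R) (M : R) :
  measurable E -> lebesgue_measure E < +oo -> measurable_fun setT u ->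
  (forall x, `|u x| <= M * \1_E x)%R -> X_norm rho u < +oo.
Proof.
move=> mE Efin mu uM; case: rho_bfn => _ [_ [_ [_ [_ [_ [rho_indic _]]]]]].
have mE1 : measurable_fun setT (\1_E : R -> R) by exact: measurable_indic.
apply: (le_lt_trans (@X_norm_le _ (fun x => M * \1_E x)%R _ _ _)) => //.
- exact: measurable_funM.
- by move=> x; rewrite (le_trans (uM x)) ?ler_norm.
rewrite X_normZ // lte_mul_pinfty //.
rewrite /X_norm (_ : (fun x => _) = fun x => (\1_E x)%:E) ?rho_indic //.
by apply/funext => x; rewrite ger0_norm.
Qed.

Lemma X_norm_neq0 (u : R -> R) (E : set R) :
  measurable E -> 0 < lebesgue_measure E -> measurable_fun setT u ->
  (forall x, E x -> u x != 0%R) -> X_norm rho u != 0.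
Proof.
case: rho_bfn => _ [rho_eq0 _] mE E_gt0 mu u_neq0.
apply/eqP => /(rho_eq0 _ (Mplus_normr mu)) [N [mN N0 uN]].
suff : lebesgue_measure E <= lebesgue_measure N by rewrite N0 leNgt E_gt0.
apply: le_measure; rewrite ?inE // => x Ex; apply: uN => /eqP.
by rewrite eqe normr_eq0; apply/negP/u_neq0.
Qed.

End banach_function_norm_facts.

Lemma ball_distP (R : realType) (y r x : R) : ball y r x <-> `|y - x| < r.
Proof. by rewrite -ball_normE. Qed.

Lemma sub_ball_shift (R : realType) (y r t : R) : 1 <= t ->
  ball (y + (t - 1) * r) r `<=` ball y (t * r).
Proof.
move=> t_ge1 x /ball_distP; rewrite ltr_distl => /andP[xl xr].
have r_gt0 : 0 < r by lra.
have s_ge0 : 0 <= (t - 1) * r by apply: mulr_ge0; lra.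
by apply/ball_distP; rewrite ltr_distl; apply/andP; split; nra.
Qed.

Section exponential_weight.
Variables (R : realType) (rho : (R -> \bar R) -> \bar R) (c : R).
Hypotheses (rho_bfn : banach_function_norm rho)
  (rho_tinv : translation_invariant rho).
Local Open Scope ereal_scope.

Let N := weighted_norm rho (fun x => expR (c * x)).

Lemma measurable_weighted_indic_ball (y r : R) :
  measurable_fun setT (fun x => \1_(ball y r) x * expR (c * x))%R.
Proof.
apply: measurable_funM; first exact: measurable_indic (measurable_ball _ _).
by apply: measurableT_comp; [exact: measurable_expR|exact: measurable_funM].
Qed.

Lemma weighted_ball_ge0 (y r : R) : 0 <= N (\1_(ball y r)).
Proof. exact: (X_norm_ge0 rho_bfn (measurable_weighted_indic_ball y r)). Qed.

Lemma weighted_ball_lt_pinfty (y r : R) : (0 < r)%R -> N (\1_(ball y r)) < +oo.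
Proof.
move=> r_gt0.
apply: (X_norm_bounded_lt_pinfty rho_bfn (measurable_ball y r) _
  (measurable_weighted_indic_ball y r) (M := expR (`|c| * (`|y| + r)))).
  by rewrite lebesgue_measure_ball ?ltry // ltW.
move=> x; rewrite normrM (ger0_norm (expR_ge0 _)) /indic.
have [xB|xNB] := pselect (ball y r x); last first.
  by rewrite memNset // normr0 !mul0r mulr0.
rewrite mem_set // normr1 mul1r mulr1 ler_expR (le_trans (ler_norm _)) //.
rewrite normrM ler_wpM2l // -[x](subrK y) (le_trans (ler_normD _ _)) //.
rewrite addrC lerD2l.
by move: xB => /ball_distP; rewrite distrC => /ltW.
Qed.

Lemma weighted_ball_neq0 (y r : R) : (0 < r)%R -> N (\1_(ball y r)) != 0.
Proof.
move=> r_gt0.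
apply: (X_norm_neq0 rho_bfn (measurable_ball y r) _
  (measurable_weighted_indic_ball y r)) => [|x xB].
  by rewrite lebesgue_measure_ball ?ltW // lte_fin mulrn_wgt0.
by rewrite /indic (mem_set xB) mul1r gt_eqF ?expR_gt0.
Qed.

Lemma weighted_ball_le (a r b s : R) : ball a r `<=` ball b s ->
  N (\1_(ball a r)) <= N (\1_(ball b s)).
Proof.
move=> sub_ab.
apply: (X_norm_le rho_bfn); try exact: measurable_weighted_indic_ball.
move=> x; rewrite !normrM ler_wpM2r // /indic.
have [xA|xNA] := pselect (ball a r x); last by rewrite memNset // normr0.
by rewrite (mem_set xA) (mem_set (sub_ab _ xA)).
Qed.

Lemma weighted_ball_shift (y r s : R) : (0 < r)%R ->
  N (\1_(ball (y + s)%R r)) = (expR (c * s))%:E * N (\1_(ball y r)).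
Proof.
move=> r_gt0; rewrite /N /weighted_norm.
rewrite -(rho_tinv (- s)%R (measurable_weighted_indic_ball _ _)); last first.
  exact: weighted_ball_lt_pinfty.
rewrite -(ger0_norm (expR_ge0 (c * s))) -(X_normZ rho_bfn); last first.
  exact: measurable_weighted_indic_ball.
congr X_norm; apply/funext => x; rewrite opprK mulrDr expRD /indic.
have -> : ((x + s)%R \in (ball (y + s)%R r : set R)) =
          (x \in (ball y r : set R)).
  by apply/idP/idP; rewrite !in_setE -!ball_normE /ball_ /= opprD addrACA
    subrr addr0.
by rewrite [RHS]mulrC mulrA.
Qed.

Lemma weighted_ball_ratio_ge (y r t : R) : (0 < r)%R -> (1 <= t)%R ->
  (expR (c * ((t - 1) * r)))%:E <=
  N (\1_(ball y (t * r))) * (N (\1_(ball y r)))^-1.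
Proof.
move=> r_gt0 t_ge1.
have n_fin : N (\1_(ball y r)) \is a fin_num.
  by rewrite ge0_fin_numE ?weighted_ball_ge0 ?weighted_ball_lt_pinfty.
have n_inv_ge0 : 0 <= (N (\1_(ball y r)))^-1.
  by rewrite inve_ge0 weighted_ball_ge0.
have sub_ball := sub_ball_shift (y := y) (r := r) t_ge1.
apply: le_trans (lee_wpmul2r n_inv_ge0 (weighted_ball_le sub_ball)).
by rewrite weighted_ball_shift // -muleA divee ?mule1 ?weighted_ball_neq0.
Qed.

End exponential_weight.

Lemma limf_einf_cvgey (R : realType) (T : choiceType) (X : filteredType T)
    (F : set_system X) {FF : Filter F} (f : X -> \bar R) :
  f @ F --> +oo%E -> limf_einf f F = +oo%E.
Proof.
move=> /cvgeyPge f_ge; rewrite limf_einfE; apply/eqyP => A _.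
apply: (@le_trans _ _ (ereal_inf (f @` [set x | A%:E <= f x]%E))).
  by apply/ereal_infP => _ [x Ax <-].
by apply: ereal_sup_ubound; exists [set x | A%:E <= f x]%E => //; exact: f_ge.
Qed.

Lemma cvgey_expRM (R : realType) (a : R) : 0 < a ->
  (expR (a * r))%:E @[r --> +oo] --> +oo%E.
Proof.
move=> a_gt0; apply/cvgeyPge => A; near=> r.
have : A / a < r by near: r; apply: nbhs_pinfty_gt; rewrite num_real.
rewrite ltr_pdivrMr // mulrC => Aar.
by rewrite lee_fin (le_trans _ (expR_ge1Dx _)) //; lra.
Unshelve. all: end_near. Qed.

Theorem theorem3p6 (R : realType) (rho : (R -> \bar R) -> \bar R) (c : R) :
  banach_function_norm rho -> translation_invariant rho -> 0 < c ->
  ~ weak_doubling (weighted_norm rho (fun x => expR (c * x))).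
Proof.
move=> rho_bfn rho_tinv c_gt0 [t [t_gt1]].
rewrite limf_einf_cvgey ?ltxx //.
have ct_gt0 : 0 < c * (t - 1) by rewrite mulr_gt0 // subr_gt0.
apply: gee_cvgy (cvgey_expRM ct_gt0).
near=> r; apply/ereal_infP => _ [y _ <-].
rewrite -mulrA; apply: weighted_ball_ratio_ge => //; last exact: ltW.
Unshelve. all: end_near. Qed.
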